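(* Let $G=(V,E)$ be a grid graph, and let $P_G=\{(x-y,\,x+y): (x,y)\in V\}\subset\mathbb{R}^2$. Then the vertex set of $G$ can be partitioned into vertex-disjoint paths on three vertices if and only if there exists a set of $\frac{2|V|}{3}$ axis-parallel unit squares discriminating $P_G$ (in particular $|V|$ is divisible by $3$).
   Context: A grid graph is a graph whose vertex set is a finite subset of $\mathbb{Z}^2$, two vertices being adjacent iff they are at Euclidean distance $1$. An axis-parallel unit square is a closed square $[x,x+1]\times[y,y+1]\subset\mathbb{R}^2$. A set $S'$ of objects discriminates $P$ if for every $p\in P$ the set $S'_p=\{s\in S': p\in s\}$ is nonempty, and $S'_p\neq S'_q$ for all distinct $p,q\in P$. *)

From Stdlib Require Import Reals ZArith List Permutation.
Import ListNotations.
Open Scope R_scope.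

(** A grid graph is given by its finite vertex set V ⊂ Z^2, represented as a
    duplicate-free list.  Two vertices are adjacent iff at Euclidean distance 1,
    i.e. |x1-x2| + |y1-y2| = 1 for integer points. *)
Definition grid_adj (u v : Z * Z) : Prop :=
  (Z.abs (fst u - fst v) + Z.abs (snd u - snd v) = 1)%Z.

Definition is_P3 (V : list (Z * Z)) (t : (Z * Z) * (Z * Z) * (Z * Z)) : Prop :=
  let '(a, b, c) := t in
  In a V /\ In b V /\ In c V /\
  a <> b /\ b <> c /\ a <> c /\ grid_adj a b /\ grid_adj b c.

(** The vertex set of G is partitioned into vertex-disjoint paths on three
    vertices: a family of P3's whose vertex lists, concatenated, form a
    permutation of V (so they are disjoint and cover V). *)
Definition P3_partition (V : list (Z * Z)) : Prop :=
  exists T : list ((Z * Z) * (Z * Z) * (Z * Z)),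
    Forall (is_P3 V) T /\
    Permutation (flat_map (fun t => let '(a, b, c) := t in [a; b; c]) T) V.

(** Axis-parallel closed unit square [x,x+1]×[y,y+1], represented by its
    lower-left corner (x, y). *)
Definition in_square (s : R * R) (p : R * R) : Prop :=
  fst s <= fst p <= fst s + 1 /\ snd s <= snd p <= snd s + 1.

Definition discriminates (S : list (R * R)) (P : list (R * R)) : Prop :=
  (forall p, In p P -> exists s, In s S /\ in_square s p) /\
  (forall p q, In p P -> In q P -> p <> q ->
     exists s, In s S /\ ~ (in_square s p <-> in_square s q)).

Definition rotate_pt (v : Z * Z) : R * R :=
  (IZR (fst v - snd v), IZR (fst v + snd v)).

Definition P_of (V : list (Z * Z)) : list (R * R) := map rotate_pt V.

From Stdlib Require Import Reals ZArith List Permutation Lia Lra Bool.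
Import ListNotations.

(** Rotating the grid by 45 degrees, v = (x, y) |-> (x - y, x + y), two
    vertices fit in a common closed unit square iff they are equal or adjacent,
    and no unit square contains three rotated vertices.  Hence a unit square
    "is" a vertex or an edge of G, as far as P_G is concerned.

    (=>) From a partition into paths a - b - c we take, for every path, the
    squares spanned by its two edges ab and cb: 2|V|/3 squares, each covering
    exactly its edge; they discriminate P_G because for every vertex u and
    every w <> u one of the two edges of u's path contains exactly one of them.

    (<=) Given 2|V|/3 discriminating squares, a double count of the incidences
    (each square covers <= 2 points, each point is covered, a point covered
    once -- a "leaf" -- owns its square, and distinct leaves own distinct
    squares) is tight.  So every square covers exactly one leaf and one other
    vertex, every vertex lies in one or two squares, and the vertices lying in
    two squares are the centers of the paths leaf - center - leaf that
    partition V. *)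

Local Notation vertex := (Z * Z)%type.
Local Notation P3triple := (vertex * vertex * vertex)%type.

Definition zz_dec (u v : vertex) : {u = v} + {u <> v}.
Proof. decide equality; apply Z.eq_dec. Defined.

Open Scope nat_scope.

(** ** Counting on lists *)

Fixpoint sumf {A} (f : A -> nat) (l : list A) : nat :=
  match l with [] => 0 | x :: t => f x + sumf f t end.

Lemma sumf_le {A} (f g : A -> nat) (l : list A) :
  (forall x, In x l -> f x <= g x) -> sumf f l <= sumf g l.
Proof.
  induction l as [|a l IH]; simpl; intros H; [lia|].
  specialize (IH (fun x Hx => H x (or_intror Hx))). specialize (H a (or_introl eq_refl)). lia.
Qed.

Lemma sumf_le_eq {A} (f g : A -> nat) (l : list A) :
  (forall x, In x l -> f x <= g x) -> sumf f l = sumf g l ->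
  forall x, In x l -> f x = g x.
Proof.
  induction l as [|a l IH]; simpl; intros H E x Hx; [contradiction|].
  assert (H1 := sumf_le f g l (fun x Hx => H x (or_intror Hx))).
  assert (H2 := H a (or_introl eq_refl)).
  destruct Hx as [<-|Hx]; [lia|]. apply IH; auto; lia.
Qed.

Lemma sumf_const {A} (c : nat) (l : list A) : sumf (fun _ => c) l = c * length l.
Proof. induction l; simpl; lia. Qed.

Lemma sumf_one_two {A} (p : A -> bool) (l : list A) :
  sumf (fun x => if p x then 1 else 2) l + length (filter p l) = 2 * length l.
Proof. induction l as [|a l IH]; simpl; auto. destruct (p a); simpl; lia. Qed.

Lemma double_count {A B} (r : A -> B -> bool) (la : list A) (lb : list B) :
  sumf (fun a => length (filter (r a) lb)) la =
  sumf (fun b => length (filter (fun a => r a b) la)) lb.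
Proof.
  induction la as [|a la IH]; simpl.
  - induction lb; simpl; auto.
  - rewrite IH. clear IH. induction lb as [|b lb IHb]; simpl; auto.
    destruct (r a b); simpl; lia.
Qed.

Lemma tight_incidence {A B} (r : A -> B -> bool) (la : list A) (lb : list B) :
  let degree a := length (filter (r a) lb) in
  let load b := length (filter (fun a => r a b) la) in
  (forall b, In b lb -> load b <= 2) ->
  (forall a, In a la -> 1 <= degree a) ->
  length (filter (fun a => degree a =? 1) la) <= length lb ->
  3 * length lb = 2 * length la ->
  (forall b, In b lb -> load b = 2) /\
  (forall a, In a la -> degree a <= 2) /\
  length (filter (fun a => degree a =? 1) la) = length lb.
Proof.
  intros degree load Hload Hdeg Hleaves Hcard.
  set (weight a := if degree a =? 1 then 1 else 2).
  assert (Hweight : forall a, In a la -> weight a <= degree a).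
  { intros a Ha. specialize (Hdeg a Ha). unfold weight. destruct (Nat.eqb_spec (degree a) 1); lia. }
  assert (Hcount := double_count r la lb). fold degree load in Hcount.
  assert (Hupper := sumf_le _ _ lb Hload). rewrite sumf_const in Hupper.
  assert (Hlower := sumf_le _ _ la Hweight).
  assert (Hweights : sumf weight la + length (filter (fun a => degree a =? 1) la) = 2 * length la)
    by apply sumf_one_two.
  repeat split; [| |lia].
  - intros b Hb. apply (sumf_le_eq load (fun _ => 2) lb Hload); auto.
    rewrite sumf_const. lia.
  - intros a Ha. rewrite <- (sumf_le_eq weight degree la Hweight) by (auto; lia).
    unfold weight. destruct (_ =? _); lia.
Qed.

Lemma three_distinct {A} (l : list A) : NoDup l -> 3 <= length l ->
  exists a b c, In a l /\ In b l /\ In c l /\ a <> b /\ b <> c /\ a <> c.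
Proof.
  intros H Hl. destruct l as [|a [|b [|c l]]]; simpl in Hl; try lia.
  inversion H as [|? ? Ha Hn1]; inversion Hn1 as [|? ? Hb Hn2].
  exists a, b, c; simpl; repeat split; auto; intros E; subst; simpl in *; tauto.
Qed.

Lemma two_distinct {A} (dec : forall x y : A, {x = y} + {x <> y}) (l : list A) (q : A) :
  NoDup l -> length l = 2 -> exists x, In x l /\ x <> q.
Proof.
  intros H Hl. destruct l as [|a [|b [|c l]]]; simpl in Hl; try lia.
  inversion H as [|? ? Ha _]. simpl in Ha.
  destruct (dec a q) as [->|Na]; [exists b | exists a]; simpl; split; auto.
Qed.

Lemma length_one_eq {A} (l : list A) (x y : A) :
  length l = 1 -> In x l -> In y l -> x = y.
Proof. destruct l as [|a [|b l]]; simpl; try lia. intros _ [<-|[]] [<-|[]]; auto. Qed.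

Lemma hd_in {A} (d : A) (l : list A) : l <> [] -> In (hd d l) l.
Proof. destruct l; simpl; auto; congruence. Qed.

Lemma NoDup_app_disjoint {A} (l1 l2 : list A) (x : A) :
  NoDup (l1 ++ l2) -> In x l1 -> In x l2 -> False.
Proof.
  induction l1 as [|y l1 IH]; simpl; [tauto|].
  intros H [->|Hx] Hx2; inversion H as [|? ? H2 H3]; subst.
  - apply H2, in_or_app; auto.
  - eauto.
Qed.

Lemma fst_determines {A B} (l : list (A * B)) (x : A) (m m' : B) :
  NoDup (map fst l) -> In (x, m) l -> In (x, m') l -> m = m'.
Proof.
  induction l as [|[y n] l IH]; simpl; [tauto|].
  intros H H1 H2; inversion H as [|? ? Hy Hl]; subst.
  destruct H1 as [E1|H1], H2 as [E2|H2].
  - congruence.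
  - injection E1 as -> ->. exfalso; apply Hy, (in_map fst _ (x, m')); auto.
  - injection E2 as -> ->. exfalso; apply Hy, (in_map fst _ (x, m)); auto.
  - eauto.
Qed.

Close Scope nat_scope.

(** ** Rotated vertices and unit squares *)

Lemma unit_interval_close (t : R) (a b : Z) :
  t <= IZR a <= t + 1 -> t <= IZR b <= t + 1 -> (Z.abs (a - b) <= 1)%Z.
Proof.
  intros Ha Hb.
  assert (H1 : (a - b <= 1)%Z) by (apply le_IZR; rewrite minus_IZR; lra).
  assert (H2 : (-1 <= a - b)%Z) by (apply le_IZR; rewrite minus_IZR; lra).
  lia.
Qed.

Lemma square_rotated_close (s : R * R) (u v : vertex) :
  in_square s (rotate_pt u) -> in_square s (rotate_pt v) ->
  (Z.abs ((fst u - snd u) - (fst v - snd v)) <= 1 /\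
   Z.abs ((fst u + snd u) - (fst v + snd v)) <= 1)%Z.
Proof.
  intros [Hu1 Hu2] [Hv1 Hv2]. split; eapply unit_interval_close; eauto.
Qed.

Lemma square_distinct_adjacent (s : R * R) (u v : vertex) :
  in_square s (rotate_pt u) -> in_square s (rotate_pt v) -> u <> v -> grid_adj u v.
Proof.
  intros Hu Hv Hne. destruct (square_rotated_close s u v Hu Hv) as [H1 H2].
  destruct u as [u1 u2], v as [v1 v2]; unfold grid_adj; simpl in *.
  assert (~ (u1 = v1 /\ u2 = v2)) by (intros [-> ->]; auto).
  lia.
Qed.

Lemma square_no_three (s : R * R) (u v w : vertex) :
  in_square s (rotate_pt u) -> in_square s (rotate_pt v) -> in_square s (rotate_pt w) ->
  u <> v -> v <> w -> u <> w -> False.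
Proof.
  intros Hu Hv Hw Nuv Nvw Nuw.
  destruct (square_rotated_close s u v Hu Hv), (square_rotated_close s v w Hv Hw),
    (square_rotated_close s u w Hu Hw).
  destruct u as [u1 u2], v as [v1 v2], w as [w1 w2]; simpl in *.
  assert (~ (u1 = v1 /\ u2 = v2)) by (intros [-> ->]; auto).
  assert (~ (v1 = w1 /\ v2 = w2)) by (intros [-> ->]; auto).
  assert (~ (u1 = w1 /\ u2 = w2)) by (intros [-> ->]; auto).
  lia.
Qed.

Lemma rotate_pt_inj (u v : vertex) : rotate_pt u = rotate_pt v -> u = v.
Proof.
  destruct u as [u1 u2], v as [v1 v2]; unfold rotate_pt; simpl.
  intros E; injection E as E1 E2. apply eq_IZR in E1, E2. f_equal; lia.
Qed.

Definition edge_square (e : vertex * vertex) : R * R :=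
  let '(a, b) := e in
  (IZR (Z.min (fst a - snd a) (fst b - snd b)), IZR (Z.min (fst a + snd a) (fst b + snd b))).

Lemma edge_square_covers (e : vertex * vertex) (w : vertex) :
  grid_adj (fst e) (snd e) ->
  (in_square (edge_square e) (rotate_pt w) <-> w = fst e \/ w = snd e).
Proof.
  destruct e as [[a1 a2] [b1 b2]], w as [w1 w2].
  unfold grid_adj, in_square, edge_square, rotate_pt; simpl. intros Hab. split.
  - intros [[H1 H2] [H3 H4]].
    rewrite <- plus_IZR in H2, H4. apply le_IZR in H1, H2, H3, H4.
    assert ((w1 = a1 /\ w2 = a2) \/ (w1 = b1 /\ w2 = b2))%Z as [[-> ->]|[-> ->]] by lia; auto.
  - intros [E|E]; injection E as -> ->; repeat split;
      first [apply IZR_le; lia | rewrite <- plus_IZR; apply IZR_le; lia].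
Qed.

Definition in_square_dec (s p : R * R) : {in_square s p} + {~ in_square s p}.
Proof.
  unfold in_square.
  destruct (Rle_dec (fst s) (fst p)), (Rle_dec (fst p) (fst s + 1)),
    (Rle_dec (snd s) (snd p)), (Rle_dec (snd p) (snd s + 1));
    try (left; tauto); right; tauto.
Defined.

Definition covers (s : R * R) (v : vertex) : bool :=
  if in_square_dec s (rotate_pt v) then true else false.

Lemma covers_spec (s : R * R) (v : vertex) : covers s v = true <-> in_square s (rotate_pt v).
Proof. unfold covers; destruct in_square_dec; split; auto; discriminate. Qed.

(** ** From a P3-partition to discriminating squares *)

Definition P3_vertices (T : list P3triple) : list vertex :=
  flat_map (fun t => let '(a, b, c) := t in [a; b; c]) T.

(** The two edges of each path a - b - c, oriented from the leaf to the center. *)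
Definition P3_edges (T : list P3triple) : list (vertex * vertex) :=
  flat_map (fun t => let '(a, b, c) := t in [(a, b); (c, b)]) T.

Definition P3_centers (T : list P3triple) : list vertex :=
  map (fun t => let '(a, b, c) := t in b) T.

Lemma P3_vertices_perm (T : list P3triple) :
  Permutation (P3_vertices T) (map fst (P3_edges T) ++ P3_centers T).
Proof.
  induction T as [|[[a b] c] T IH]; simpl; auto.
  constructor. apply perm_trans with (c :: b :: map fst (P3_edges T) ++ P3_centers T).
  - apply perm_trans with (b :: c :: map fst (P3_edges T) ++ P3_centers T);
      [do 2 constructor; exact IH | apply perm_swap].
  - constructor. apply Permutation_middle.
Qed.

Lemma P3_edges_length (T : list P3triple) : length (P3_edges T) = (2 * length T)%nat.
Proof. induction T as [|[[a b] c] T IH]; simpl; auto. rewrite IH; lia. Qed.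

Lemma P3_vertices_length (T : list P3triple) : length (P3_vertices T) = (3 * length T)%nat.
Proof. induction T as [|[[a b] c] T IH]; simpl; auto. rewrite IH; lia. Qed.

Lemma in_P3_edges (T : list P3triple) (e : vertex * vertex) :
  In e (P3_edges T) <-> exists a b c, In (a, b, c) T /\ In e [(a, b); (c, b)].
Proof.
  unfold P3_edges; rewrite in_flat_map. split.
  - intros [[[a b] c] H]. exists a, b, c; exact H.
  - intros (a & b & c & H). exists (a, b, c); exact H.
Qed.

Lemma in_P3_vertices (T : list P3triple) (v : vertex) :
  In v (P3_vertices T) <-> exists a b c, In (a, b, c) T /\ In v [a; b; c].
Proof.
  unfold P3_vertices; rewrite in_flat_map. split.
  - intros [[[a b] c] H]. exists a, b, c; exact H.
  - intros (a & b & c & H). exists (a, b, c); exact H.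
Qed.

Lemma P3_edges_separate (a b c u w : vertex) :
  a <> b -> b <> c -> a <> c -> In u [a; b; c] -> u <> w ->
  exists e, In e [(a, b); (c, b)] /\
    ~ ((u = fst e \/ u = snd e) <-> (w = fst e \/ w = snd e)).
Proof.
  intros Hab Hbc Hac Hu Huw.
  destruct (zz_dec w a), (zz_dec w b), (zz_dec w c);
  destruct Hu as [<-|[<-|[<-|[]]]]; subst; try congruence;
  first [ exists (a, b); split; [simpl; auto|]; simpl; intuition congruence
        | exists (c, b); split; [simpl; auto|]; simpl; intuition congruence ].
Qed.

Section Forward.

Variables (V : list vertex) (T : list P3triple).
Hypotheses (HV : NoDup V) (HT : Forall (is_P3 V) T) (HTV : Permutation (P3_vertices T) V).

Definition edge_squares : list (R * R) := map edge_square (P3_edges T).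

Lemma P3_of_partition (a b c : vertex) :
  In (a, b, c) T -> a <> b /\ b <> c /\ a <> c /\ grid_adj a b /\ grid_adj b c.
Proof.
  intros H. destruct (proj1 (Forall_forall _ _) HT _ H) as (_ & _ & _ & Hshape). exact Hshape.
Qed.

Lemma partition_edge_spec (x m : vertex) :
  In (x, m) (P3_edges T) ->
  grid_adj x m /\ In x (map fst (P3_edges T)) /\ In m (P3_centers T).
Proof.
  intros He. assert (Hx : In x (map fst (P3_edges T))) by (apply (in_map fst _ (x, m)); auto).
  apply in_P3_edges in He as (a & b & c & Habc & He).
  destruct (P3_of_partition a b c Habc) as (_ & _ & _ & Hab & Hbc).
  assert (Hb : In b (P3_centers T))
    by (apply (in_map (fun t : P3triple => let '(_, b, _) := t in b) _ (a, b, c)); auto).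
  destruct He as [E|[E|[]]]; injection E as <- <-; repeat split; auto.
  unfold grid_adj in *; lia.
Qed.

Lemma leaves_centers_NoDup : NoDup (map fst (P3_edges T) ++ P3_centers T).
Proof.
  eapply Permutation_NoDup; [| exact HV].
  apply perm_trans with (P3_vertices T); [apply Permutation_sym, HTV | apply P3_vertices_perm].
Qed.

(** Distinct edges of the partition span distinct squares: an edge square
    determines its leaf, and a leaf lies on a single edge. *)
Lemma edge_squares_NoDup : NoDup edge_squares.
Proof.
  assert (Hleaves : NoDup (map fst (P3_edges T))) by exact (NoDup_app_remove_r _ _ leaves_centers_NoDup).
  apply NoDup_map_NoDup_ForallPairs; [| exact (NoDup_map_inv _ _ Hleaves)].
  intros [x m] [y m'] H1 H2 E.
  destruct (partition_edge_spec x m H1) as (A1 & L1 & _).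
  destruct (partition_edge_spec y m' H2) as (A2 & _ & C2).
  assert (Hx : in_square (edge_square (x, m)) (rotate_pt x)) by (apply edge_square_covers; simpl; auto).
  rewrite E in Hx. apply edge_square_covers in Hx; auto. simpl in Hx.
  destruct Hx as [<- | ->].
  - f_equal. exact (fst_determines _ x m m' Hleaves H1 H2).
  - exfalso; exact (NoDup_app_disjoint _ _ _ leaves_centers_NoDup L1 C2).
Qed.

Lemma edge_squares_count : (3 * length edge_squares = 2 * length V)%nat.
Proof.
  unfold edge_squares. rewrite length_map, P3_edges_length, <- (Permutation_length HTV),
    P3_vertices_length. lia.
Qed.

Lemma edge_squares_discriminate : discriminates edge_squares (P_of V).
Proof.
  assert (Hsq : forall x m, In (x, m) (P3_edges T) ->
            In (edge_square (x, m)) edge_squares /\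
            forall w, in_square (edge_square (x, m)) (rotate_pt w) <-> w = x \/ w = m).
  { intros x m He. split; [apply in_map; auto|]. intros w.
    apply edge_square_covers. apply (partition_edge_spec x m He). }
  assert (Hpath : forall u, In u V -> exists a b c, In (a, b, c) T /\ In u [a; b; c]).
  { intros u Hu. apply in_P3_vertices, (Permutation_in _ (Permutation_sym HTV)); auto. }
  assert (Hedge : forall a b c e, In (a, b, c) T -> In e [(a, b); (c, b)] -> In e (P3_edges T)).
  { intros a b c e H1 H2. apply in_P3_edges; eauto. }
  split.
  - intros p Hp. apply in_map_iff in Hp as [u [<- Hu]].
    destruct (Hpath u Hu) as (a & b & c & Habc & Hu').
    assert (Hab : In (a, b) (P3_edges T)) by (eapply Hedge; simpl; eauto).
    assert (Hcb : In (c, b) (P3_edges T)) by (eapply Hedge; simpl; eauto).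
    destruct Hu' as [-> | [-> | [-> | []]]];
      [exists (edge_square (u, b)) | exists (edge_square (a, u)) | exists (edge_square (u, b))];
      (split; [apply Hsq; auto | apply Hsq; auto]).
  - intros p q Hp Hq Hpq.
    apply in_map_iff in Hp as [u [<- Hu]]. apply in_map_iff in Hq as [w [<- Hw]].
    destruct (Hpath u Hu) as (a & b & c & Habc & Hu').
    destruct (P3_of_partition a b c Habc) as (Nab & Nbc & Nac & _).
    destruct (P3_edges_separate a b c u w Nab Nbc Nac Hu') as ([x m] & He & Hsep);
      [intros ->; auto|].
    destruct (Hsq x m (Hedge a b c _ Habc He)) as [Hin Hcov].
    exists (edge_square (x, m)); split; auto.
    rewrite !Hcov. exact Hsep.
Qed.

End Forward.

(** ** From discriminating squares to a P3-partition *)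

Section Backward.

Variables (V : list vertex) (S : list (R * R)).
Hypotheses (HV : NoDup V) (HS : NoDup S) (Hcard : (3 * length S = 2 * length V)%nat)
  (Hdisc : discriminates S (P_of V)).

Definition squares_of (v : vertex) : list (R * R) := filter (fun s => covers s v) S.
Definition points_of (s : R * R) : list vertex := filter (covers s) V.
Definition deg (v : vertex) : nat := length (squares_of v).

Lemma squares_of_spec (v : vertex) (s : R * R) :
  In s (squares_of v) <-> In s S /\ in_square s (rotate_pt v).
Proof. unfold squares_of; rewrite filter_In, covers_spec; tauto. Qed.

Lemma points_of_spec (s : R * R) (v : vertex) :
  In v (points_of s) <-> In v V /\ in_square s (rotate_pt v).
Proof. unfold points_of; rewrite filter_In, covers_spec; tauto. Qed.

Lemma deg_pos (v : vertex) : In v V -> (1 <= deg v)%nat.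
Proof.
  intros Hv. destruct (proj1 Hdisc (rotate_pt v) (in_map _ _ _ Hv)) as [s Hs].
  destruct (squares_of v) as [|s0 l] eqn:E; [|unfold deg; rewrite E; simpl; lia].
  apply squares_of_spec in Hs. rewrite E in Hs. contradiction.
Qed.

Lemma points_at_most_two (s : R * R) : (length (points_of s) <= 2)%nat.
Proof.
  destruct (Nat.le_gt_cases (length (points_of s)) 2) as [|Hgt]; auto.
  destruct (three_distinct (points_of s)) as (u & v & w & Hu & Hv & Hw & N1 & N2 & N3);
    [apply NoDup_filter, HV | lia |].
  apply points_of_spec in Hu, Hv, Hw. exfalso.
  exact (square_no_three s u v w (proj2 Hu) (proj2 Hv) (proj2 Hw) N1 N2 N3).
Qed.

Definition leaf_square (v : vertex) : R * R := hd (0, 0) (squares_of v).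

Lemma leaf_square_in (v : vertex) : In v V -> In (leaf_square v) (squares_of v).
Proof.
  intros Hv. apply hd_in. intros E. assert (H := deg_pos v Hv).
  unfold deg in H. rewrite E in H. simpl in H. lia.
Qed.

Lemma leaf_square_unique (v : vertex) (s : R * R) :
  In v V -> deg v = 1%nat -> In s (squares_of v) -> s = leaf_square v.
Proof. intros Hv Hd Hs. exact (length_one_eq _ _ _ Hd Hs (leaf_square_in v Hv)). Qed.

(** Two leaves in a common square are equal: a square separating them would
    be the square of one of them, which also covers the other. *)
Lemma leaves_apart (s : R * R) (u v : vertex) :
  In s S -> In u V -> In v V -> deg u = 1%nat -> deg v = 1%nat ->
  in_square s (rotate_pt u) -> in_square s (rotate_pt v) -> u = v.
Proof.
  intros Hs Hu Hv Du Dv Iu Iv. destruct (zz_dec u v) as [|Nuv]; auto. exfalso.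
  assert (Hsep : rotate_pt u <> rotate_pt v) by (intros E; apply Nuv, rotate_pt_inj, E).
  destruct (proj2 Hdisc _ _ (in_map _ _ _ Hu) (in_map _ _ _ Hv) Hsep) as [s' [Hs' Hdiff]].
  assert (Hu_s : s = leaf_square u) by (apply leaf_square_unique; auto; apply squares_of_spec; auto).
  assert (Hv_s : s = leaf_square v) by (apply leaf_square_unique; auto; apply squares_of_spec; auto).
  destruct (in_square_dec s' (rotate_pt u)) as [Iu'|Iu'].
  - assert (s' = leaf_square u) by (apply leaf_square_unique; auto; apply squares_of_spec; auto).
    apply Hdiff. split; intros _; [congruence|]. congruence.
  - assert (Iv' : in_square s' (rotate_pt v)) by tauto.
    assert (s' = leaf_square v) by (apply leaf_square_unique; auto; apply squares_of_spec; auto).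
    apply Iu'. congruence.
Qed.

Definition leaves : list vertex := filter (fun v => deg v =? 1)%nat V.
Definition centers : list vertex := filter (fun v => deg v =? 2)%nat V.

Lemma in_leaves (v : vertex) : In v leaves <-> In v V /\ deg v = 1%nat.
Proof. unfold leaves; rewrite filter_In, Nat.eqb_eq; tauto. Qed.

Lemma in_centers (v : vertex) : In v centers <-> In v V /\ deg v = 2%nat.
Proof. unfold centers; rewrite filter_In, Nat.eqb_eq; tauto. Qed.

(** Distinct leaves own distinct squares, so there are at most |S| leaves. *)
Lemma leaf_squares_NoDup : NoDup (map leaf_square leaves).
Proof.
  apply NoDup_map_NoDup_ForallPairs; [|apply NoDup_filter, HV].
  intros u v Hu Hv E. apply in_leaves in Hu as [Hu Du], Hv as [Hv Dv].
  destruct (proj1 (squares_of_spec u _) (leaf_square_in u Hu)) as [Hs Iu].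
  destruct (proj1 (squares_of_spec v _) (leaf_square_in v Hv)) as [_ Iv].
  rewrite <- E in Iv. exact (leaves_apart _ u v Hs Hu Hv Du Dv Iu Iv).
Qed.

Lemma leaf_squares_incl : incl (map leaf_square leaves) S.
Proof.
  intros s Hs. apply in_map_iff in Hs as [v [<- Hv]]. apply in_leaves in Hv as [Hv _].
  apply (squares_of_spec v), leaf_square_in, Hv.
Qed.

Lemma incidence_tight :
  (forall s, In s S -> length (points_of s) = 2%nat) /\
  (forall v, In v V -> (deg v <= 2)%nat) /\
  length leaves = length S.
Proof.
  apply (tight_incidence (fun v s => covers s v) V S).
  - intros s _. apply points_at_most_two.
  - exact deg_pos.
  - rewrite <- (length_map leaf_square). exact (NoDup_incl_length leaf_squares_NoDup leaf_squares_incl).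
  - exact Hcard.
Qed.

Lemma square_two_points (s : R * R) : In s S -> length (points_of s) = 2%nat.
Proof. apply incidence_tight. Qed.

Lemma deg_one_or_two (v : vertex) : In v V -> deg v = 1%nat \/ deg v = 2%nat.
Proof.
  intros Hv. assert (H1 := deg_pos v Hv). assert (H2 := proj1 (proj2 incidence_tight) v Hv). lia.
Qed.

(** Since the leaf squares are distinct and as many as the squares, every
    square is the square of some leaf. *)
Lemma square_has_leaf (s : R * R) :
  In s S -> exists w, In w V /\ deg w = 1%nat /\ in_square s (rotate_pt w).
Proof.
  intros Hs.
  assert (Hincl : incl S (map leaf_square leaves)).
  { apply NoDup_length_incl; [exact leaf_squares_NoDup | | exact leaf_squares_incl].
    rewrite length_map, (proj2 (proj2 incidence_tight)). lia. }
  apply Hincl, in_map_iff in Hs as [w [<- Hw]]. apply in_leaves in Hw as [Hw Dw].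
  exists w; split; [|split]; auto. apply (squares_of_spec w), leaf_square_in, Hw.
Qed.

Definition partner (s : R * R) (q : vertex) : vertex :=
  hd q (filter (fun u => covers s u && if zz_dec u q then false else true) V).

Lemma partner_spec (s : R * R) (q : vertex) :
  In s S -> in_square s (rotate_pt q) ->
  In (partner s q) V /\ in_square s (rotate_pt (partner s q)) /\ partner s q <> q.
Proof.
  intros Hs Iq.
  destruct (two_distinct zz_dec (points_of s) q (NoDup_filter _ HV) (square_two_points s Hs))
    as [x [Hx Nx]].
  apply points_of_spec in Hx as [Hx Ix].
  assert (Hin : In (partner s q)
                  (filter (fun u => covers s u && if zz_dec u q then false else true) V)).
  { apply hd_in. intros E.
    assert (Hx' : In x (filter (fun u => covers s u && if zz_dec u q then false else true) V)).
    { apply filter_In; split; auto. apply andb_true_iff; split; [apply covers_spec; auto|].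
      destruct (zz_dec x q); congruence. }
    rewrite E in Hx'; contradiction. }
  apply filter_In in Hin as [H1 H2]. apply andb_true_iff in H2 as [H2 H3].
  apply covers_spec in H2. destruct (zz_dec (partner s q) q); [discriminate|]. auto.
Qed.

Lemma partner_unique (s : R * R) (q x : vertex) :
  In s S -> in_square s (rotate_pt q) -> in_square s (rotate_pt x) -> x <> q ->
  partner s q = x.
Proof.
  intros Hs Iq Ix Nx. destruct (partner_spec s q Hs Iq) as (_ & Ip & Np).
  destruct (zz_dec (partner s q) x) as [|Npx]; auto. exfalso.
  exact (square_no_three s (partner s q) x q Ip Ix Iq Npx Nx Np).
Qed.

Lemma partner_of_center (s : R * R) (q : vertex) :
  In s S -> deg q = 2%nat -> in_square s (rotate_pt q) -> deg (partner s q) = 1%nat.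
Proof.
  intros Hs Dq Iq. destruct (square_has_leaf s Hs) as (w & Hw & Dw & Iw).
  rewrite (partner_unique s q w); auto. intros ->; lia.
Qed.

Definition center_path (q : vertex) : P3triple :=
  match squares_of q with
  | s1 :: s2 :: _ => (partner s1 q, q, partner s2 q)
  | _ => (q, q, q)
  end.

Lemma center_path_shape (q : vertex) : deg q = 2%nat ->
  exists s1 s2, squares_of q = [s1; s2] /\ center_path q = (partner s1 q, q, partner s2 q).
Proof.
  unfold deg, center_path. intros Dq.
  destruct (squares_of q) as [|s1 [|s2 [|s3 l]]]; simpl in Dq; try lia. eauto.
Qed.

Lemma center_path_P3 (q : vertex) : In q V -> deg q = 2%nat -> is_P3 V (center_path q).
Proof.
  intros Hq Dq. destruct (center_path_shape q Dq) as (s1 & s2 & Eq & ->).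
  assert (N12 : s1 <> s2).
  { intros E. assert (Hn := NoDup_filter (fun s => covers s q) HS).
    fold (squares_of q) in Hn. rewrite Eq, E in Hn. inversion Hn as [|? ? Hnn _]. simpl in Hnn; tauto. }
  assert (I1 : In s1 (squares_of q)) by (rewrite Eq; simpl; auto).
  assert (I2 : In s2 (squares_of q)) by (rewrite Eq; simpl; auto).
  apply squares_of_spec in I1 as [S1 J1], I2 as [S2 J2].
  destruct (partner_spec s1 q S1 J1) as (A1 & B1 & C1).
  destruct (partner_spec s2 q S2 J2) as (A2 & B2 & C2).
  assert (L1 := partner_of_center s1 q S1 Dq J1).
  unfold is_P3. repeat split; auto.
  - intros E. apply N12.
    rewrite (leaf_square_unique (partner s1 q) s1), (leaf_square_unique (partner s1 q) s2);
      auto; apply squares_of_spec; [rewrite E|]; auto.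
  - apply (square_distinct_adjacent s1); auto.
  - apply (square_distinct_adjacent s2); auto.
Qed.

(** Every vertex lies on the path of some center: a center on its own, a leaf
    on the path of the other point of its square. *)
Lemma center_paths_cover (v : vertex) : In v V ->
  exists q, In q centers /\ In v (P3_vertices [center_path q]).
Proof.
  intros Hv. destruct (deg_one_or_two v Hv) as [Dv|Dv].
  - destruct (proj1 (squares_of_spec v _) (leaf_square_in v Hv)) as [Hs Is].
    set (s := leaf_square v) in *.
    destruct (partner_spec s v Hs Is) as (Hq & Iq & Nq). set (q := partner s v) in *.
    assert (Dq : deg q = 2%nat).
    { destruct (deg_one_or_two q Hq) as [Dq|Dq]; auto.
      exfalso. exact (Nq (leaves_apart s q v Hs Hq Hv Dq Dv Iq Is)). }
    exists q. split; [apply in_centers; auto|].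
    destruct (center_path_shape q Dq) as (s1 & s2 & Eq & ->).
    assert (Hsq : In s (squares_of q)) by (apply squares_of_spec; auto).
    rewrite Eq in Hsq. simpl.
    destruct Hsq as [<- | [<- | []]]; [left | right; right; left];
      apply partner_unique; auto; intros ->; auto.
  - exists v. split; [apply in_centers; auto|].
    destruct (center_path_shape v Dv) as (s1 & s2 & _ & ->). simpl; auto.
Qed.

Lemma leaves_centers_length : (length leaves + length centers = length V)%nat.
Proof.
  rewrite <- (filter_length (fun v => deg v =? 1)%nat V). f_equal.
  unfold centers. f_equal. apply filter_ext_in. intros v Hv.
  destruct (deg_one_or_two v Hv) as [-> | ->]; reflexivity.
Qed.

Lemma partition_from_squares : P3_partition V.
Proof.
  exists (map center_path centers). split.
  - apply Forall_forall. intros t Ht. apply in_map_iff in Ht as [q [<- Hq]].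
    apply in_centers in Hq as [Hq Dq]. exact (center_path_P3 q Hq Dq).
  - fold (P3_vertices (map center_path centers)).
    apply Permutation_sym, NoDup_Permutation_bis; auto.
    + rewrite P3_vertices_length, length_map.
      assert (Hsplit := leaves_centers_length). destruct incidence_tight as (_ & _ & ?). lia.
    + intros v Hv. destruct (center_paths_cover v Hv) as (q & Hq & Hvq).
      apply in_P3_vertices in Hvq as (a & b & c & [E|[]] & Hv').
      apply in_P3_vertices. exists a, b, c. split; auto. rewrite <- E. apply in_map, Hq.
Qed.

End Backward.

Theorem mainTheorem11 (V : list (Z * Z)) (HV : NoDup V) :
  P3_partition V <->
  exists S : list (R * R),
    NoDup S /\ (3 * length S = 2 * length V)%nat /\ discriminates S (P_of V).
Proof.
  split.
  - intros [T [HT HTV]]. exists (edge_squares T).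
    split; [|split].
    + exact (edge_squares_NoDup V T HV HT HTV).
    + exact (edge_squares_count V T HTV).
    + exact (edge_squares_discriminate V T HT HTV).
  - intros (S & HS & Hcard & Hdisc). exact (partition_from_squares V S HV HS Hcard Hdisc).
Qed.
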